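(* Let $z$ be a binomial random variable with parameters $n\ge1$ and $\nu\in[0,1]$. For any $c\ge1$ with $c\nu<1$ and any $\lambda\in\big[0,\frac{\ln c}{(1-c\nu)(4n-3)}\big]$, $\mathbb{E}e^{\lambda z^2}\le e^{cn\nu(1+cn\nu)\lambda}$. *)

From Stdlib Require Import Reals.
Open Scope R_scope.

Definition binom_pmf (n : nat) (nu : R) (k : nat) : R :=
  C n k * nu ^ k * (1 - nu) ^ (n - k).

Definition binom_expect (n : nat) (nu : R) (f : R -> R) : R :=
  sum_f_R0 (fun k => binom_pmf n nu k * f (INR k)) n.

(* Write p = c nu.  For a binomial z with m trials, conditioning on the last trial gives
   E e^(lambda z^2 + mu z) = (1 - nu) E_(m-1) e^(lambda z^2 + mu z)
                              + nu e^(lambda + mu) E_(m-1) e^(lambda z^2 + (mu + 2 lambda) z),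
   so by induction on m (for all linear coefficients mu at once) one bounds this
   quadratic-exponential moment by exp (p m mu + lambda p m (1 + p m)).  The inductive step
   only needs the Bernoulli estimate 1 - nu + nu e^y <= e^(p y) for 0 <= y <= ln c / (1 - p),
   which follows from the convexity of exp; the hypothesis on lambda is what keeps every
   exponent y occurring in the induction inside this range.  The theorem is the case mu = 0. *)
From Stdlib Require Import Reals Lra Lia Psatz.
Open Scope R_scope.

Lemma exp_le_compat x y : x <= y -> exp x <= exp y.
Proof. intros [Hlt | ->]; [left; exact (exp_increasing _ _ Hlt) | lra]. Qed.

Lemma exp_convex_chord a y : 0 <= a <= 1 -> exp (a * y) <= 1 + a * (exp y - 1).
Proof.
  intros Ha.
  (* The tangent lines of exp at a y, evaluated at 0 and at y, bound exp from below. *)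
  pose proof (exp_ineq1_le (- (a * y))) as tangent_0.
  pose proof (exp_ineq1_le ((1 - a) * y)) as tangent_y.
  assert (E0 : exp (a * y) * exp (- (a * y)) = 1)
    by (rewrite <- exp_plus, Rplus_opp_r; exact exp_0).
  assert (Ey : exp (a * y) * exp ((1 - a) * y) = exp y)
    by (rewrite <- exp_plus; f_equal; ring).
  pose proof (exp_pos (a * y)).
  assert (exp (a * y) * (1 - a * y) <= 1) by nra.
  assert (exp (a * y) * (1 + (1 - a) * y) <= exp y) by nra.
  nra.
Qed.

Lemma bernoulli_mgf_le nu c y :
  0 <= nu -> 1 <= c -> c * nu < 1 -> 0 <= y -> (1 - c * nu) * y <= ln c ->
  1 - nu + nu * exp y <= exp (c * nu * y).
Proof.
  intros Hnu Hc Hp Hy Hyc.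
  set (a := 1 - c * nu).
  assert (Hay : exp (a * y) <= c) by (rewrite <- (exp_ln c) by lra; exact (exp_le_compat _ _ Hyc)).
  assert (chord : exp (a * y) <= 1 + a * (exp y - 1)) by (apply exp_convex_chord; unfold a; nra).
  assert (Hey : 1 <= exp y) by (pose proof (exp_ineq1_le y); lra).
  assert (split_y : exp (c * nu * y) * exp (a * y) = exp y)
    by (rewrite <- exp_plus; f_equal; unfold a; ring).
  pose proof (exp_pos (a * y)); pose proof (exp_pos (c * nu * y)).
  assert (exp (a * y) * (nu * (exp y - 1)) <= c * (nu * (exp y - 1)))
    by (apply Rmult_le_compat_r; nra).
  (* Multiplied by exp (a y), the claim reads exp (a y) (1 + nu (e^y - 1)) <= e^y. *)
  assert (exp (a * y) * (1 - nu + nu * exp y) <= exp (a * y) * exp (c * nu * y))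
    by (unfold a in *; nra).
  nra.
Qed.

Lemma C_n_0 n : C n 0 = 1.
Proof.
  unfold C. rewrite Nat.sub_0_r. change (INR (Factorial.fact 0)) with 1.
  field. apply INR_fact_neq_0.
Qed.

Lemma C_n_n n : C n n = 1.
Proof.
  unfold C. rewrite Nat.sub_diag. change (INR (Factorial.fact 0)) with 1.
  field. apply INR_fact_neq_0.
Qed.

Definition binom_sum (m : nat) (nu : R) (f : nat -> R) : R :=
  sum_f_R0 (fun k => binom_pmf m nu k * f k) m.

Lemma binom_sum_ext m nu f g : (forall k, f k = g k) -> binom_sum m nu f = binom_sum m nu g.
Proof. intros Hfg. apply sum_eq. intros k _. now rewrite Hfg. Qed.

Lemma binom_sum_scal m nu K f : binom_sum m nu (fun k => K * f k) = K * binom_sum m nu f.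
Proof. unfold binom_sum. rewrite scal_sum. apply sum_eq. intros; ring. Qed.

Lemma binom_sum_S m nu f :
  binom_sum (S m) nu f = (1 - nu) * binom_sum m nu f + nu * binom_sum m nu (fun k => f (S k)).
Proof.
  unfold binom_sum, binom_pmf.
  (* Pascal's rule splits the (m+1)-st row into a "last trial fails" part [a], padded by a
     zero term at k = m+1, and a "last trial succeeds" part [b], shifted by one. *)
  set (a := fun k => if (k <=? m)%nat then C m k * nu ^ k * (1 - nu) ^ (m - k) * f k else 0).
  set (b := fun k => match k with
                     | O => 0
                     | S j => C m j * nu ^ j * (1 - nu) ^ (m - j) * f (S j)
                     end).
  assert (pascal_split :
    sum_f_R0 (fun k => C (S m) k * nu ^ k * (1 - nu) ^ (S m - k) * f k) (S m)
    = (1 - nu) * sum_f_R0 a (S m) + nu * sum_f_R0 b (S m)).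
  { rewrite !scal_sum, <- plus_sum. apply sum_eq. intros k Hk. unfold a, b.
    destruct k as [|j].
    - simpl. rewrite !C_n_0, Nat.sub_0_r. ring.
    - destruct (Nat.eq_dec j m) as [-> | Hj].
      + replace (S m <=? m)%nat with false by (symmetry; apply Nat.leb_gt; lia).
        rewrite !Nat.sub_diag, !C_n_n. simpl. ring.
      + replace (S j <=? m)%nat with true by (symmetry; apply Nat.leb_le; lia).
        rewrite <- pascal by lia.
        replace (S m - S j)%nat with (S (m - S j)) by lia.
        replace (m - j)%nat with (S (m - S j)) by lia. simpl. ring. }
  rewrite pascal_split, tech5, (decomp_sum b (S m)) by lia. simpl pred.
  replace (a (S m)) with 0
    by (unfold a; replace (S m <=? m)%nat with false by (symmetry; apply Nat.leb_gt; lia); reflexivity).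
  replace (b 0%nat) with 0 by reflexivity.
  rewrite Rplus_0_r, Rplus_0_l.
  f_equal; f_equal; apply sum_eq; intros k Hk; unfold a.
  replace (k <=? m)%nat with true by (symmetry; apply Nat.leb_le; lia). reflexivity.
Qed.

Section QuadraticExponentialMoment.

Variables nu c lambda : R.
Hypothesis Hnu : 0 <= nu <= 1.
Hypothesis Hc : 1 <= c.
Hypothesis Hp : c * nu < 1.
Hypothesis Hlambda : 0 <= lambda.

Let p := c * nu.

Lemma binom_sum_quad_exp_le m : forall mu, 0 <= mu ->
  (1 - p) * (mu + 2 * lambda * INR m) <= ln c + (1 - p) * lambda ->
  binom_sum m nu (fun k => exp (lambda * INR k ^ 2 + mu * INR k))
    <= exp (p * INR m * mu + lambda * p * INR m * (1 + p * INR m)).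
Proof.
  induction m as [|m IH]; intros mu Hmu Hrange.
  { unfold binom_sum, binom_pmf. simpl. rewrite C_n_0.
    replace (lambda * (0 * (0 * 1)) + mu * 0) with 0 by ring.
    replace (p * 0 * mu + lambda * p * 0 * (1 + p * 0)) with 0 by ring.
    rewrite exp_0. lra. }
  rewrite S_INR in Hrange |- *.
  set (x := INR m) in Hrange |- *.
  assert (Hx : 0 <= x) by apply pos_INR.
  assert (Hp0 : 0 <= p) by (unfold p; nra).
  assert (Hp1 : 0 <= (1 - p) * lambda) by (apply Rmult_le_pos; unfold p; lra).
  assert (shift :
    binom_sum m nu (fun k => exp (lambda * INR (S k) ^ 2 + mu * INR (S k)))
    = exp (lambda + mu)
      * binom_sum m nu (fun k => exp (lambda * INR k ^ 2 + (mu + 2 * lambda) * INR k))).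
  { rewrite <- binom_sum_scal. apply binom_sum_ext. intros k.
    rewrite <- exp_plus, S_INR. f_equal. ring. }
  set (A := p * x * mu + lambda * p * x * (1 + p * x)).
  set (y := lambda + mu + 2 * lambda * p * x).
  assert (IH_mu := IH mu Hmu ltac:(unfold p, x in *; nra)).
  assert (IH_shift := IH (mu + 2 * lambda) ltac:(lra) ltac:(unfold p, x in *; nra)).
  fold x A in IH_mu. fold x in IH_shift.
  replace (p * x * (mu + 2 * lambda) + lambda * p * x * (1 + p * x))
    with (A + 2 * lambda * p * x) in IH_shift by (unfold A; ring).
  assert (Hlpx : 0 <= lambda * p * x) by (apply Rmult_le_pos; [apply Rmult_le_pos|]; lra).
  assert (Hy : 0 <= y) by (unfold y; lra).
  assert (Hyc : (1 - p) * y <= ln c).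
  { assert (lambda * p * x <= lambda * x).
    { assert (0 <= lambda * x) by (apply Rmult_le_pos; lra).
      assert (p <= 1) by (unfold p; lra). nra. }
    assert ((1 - p) * y <= (1 - p) * (mu + lambda + 2 * lambda * x))
      by (apply Rmult_le_compat_l; [unfold p; lra | unfold y; lra]).
    lra. }
  assert (bernoulli := bernoulli_mgf_le nu c y ltac:(lra) Hc Hp Hy Hyc). fold p in bernoulli.
  pose proof (exp_pos A); pose proof (exp_pos (lambda + mu)).
  rewrite binom_sum_S, shift.
  apply Rle_trans with ((1 - nu) * exp A + nu * (exp (lambda + mu) * exp (A + 2 * lambda * p * x))).
  { apply Rplus_le_compat; apply Rmult_le_compat_l; try lra.
    apply Rmult_le_compat_l; lra. }
  replace ((1 - nu) * exp A + nu * (exp (lambda + mu) * exp (A + 2 * lambda * p * x)))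
    with (exp A * (1 - nu + nu * exp y))
    by (unfold y; rewrite !exp_plus; ring).
  apply Rle_trans with (exp A * exp (p * y)); [apply Rmult_le_compat_l; lra|].
  rewrite <- exp_plus. apply exp_le_compat.
  assert (0 <= lambda * p ^ 2) by (apply Rmult_le_pos; nra).
  unfold A, y. nra.
Qed.

End QuadraticExponentialMoment.

Theorem lemma7 (n : nat) (nu c lambda : R) :
  (1 <= n)%nat ->
  0 <= nu <= 1 ->
  1 <= c ->
  c * nu < 1 ->
  0 <= lambda <= ln c / ((1 - c * nu) * (4 * INR n - 3)) ->
  binom_expect n nu (fun z => exp (lambda * z ^ 2))
    <= exp (c * INR n * nu * (1 + c * INR n * nu) * lambda).
Proof.
  intros Hn Hnu Hc Hp [Hlambda Hlambda_max].
  assert (Hn1 : 1 <= INR n) by exact (le_INR 1 n Hn).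
  assert (Hden : 0 < (1 - c * nu) * (4 * INR n - 3)) by (apply Rmult_lt_0_compat; lra).
  assert (Hrange : lambda * ((1 - c * nu) * (4 * INR n - 3)) <= ln c).
  { apply (Rmult_le_compat_r _ _ _ (Rlt_le _ _ Hden)) in Hlambda_max.
    unfold Rdiv in Hlambda_max. rewrite Rmult_assoc, Rinv_l in Hlambda_max by lra. lra. }
  (* The induction only needs lambda (1 - c nu) (2 n - 1) <= ln c, and 2 n - 1 <= 4 n - 3. *)
  assert (Hrange0 : (1 - c * nu) * (0 + 2 * lambda * INR n) <= ln c + (1 - c * nu) * lambda).
  { assert (0 <= (1 - c * nu) * lambda * (2 * INR n - 2))
      by (apply Rmult_le_pos; [apply Rmult_le_pos|]; lra).
    nra. }
  pose proof (binom_sum_quad_exp_le nu c lambda Hnu Hc Hp Hlambda n 0 (Rle_refl 0) Hrange0)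
    as bound.
  unfold binom_expect.
  change (sum_f_R0 (fun k => binom_pmf n nu k * exp (lambda * INR k ^ 2)) n)
    with (binom_sum n nu (fun k => exp (lambda * INR k ^ 2))).
  rewrite (binom_sum_ext n nu _ (fun k => exp (lambda * INR k ^ 2 + 0 * INR k)))
    by (intros k; f_equal; ring).
  eapply Rle_trans; [exact bound|]. right. f_equal. ring.
Qed.
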